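(* Let $\nabla$ be an affine connection, $h$ a non-degenerate symmetric $(0,2)$-tensor field and $J$ an $h$-symmetric $(1,1)$-tensor field on a smooth manifold $M$. Then the generalized almost product structure $\hat J$ on $TM\oplus T^*M$, $\hat J(X+\eta)=-X+2J(h^{-1}(\eta))+\eta$, is $\nabla$-integrable if and only if $(\nabla_{JX}h)(JY)-(\nabla_{JY}h)(JX)+h(T^\nabla(JX,JY))=(\nabla_{JX}J^* )(h(Y))-(\nabla_{JY}J^* )(h(X))$ for all vector fields $X,Y$ on $M$.
   Context: $h$ is viewed as the isomorphism $TM\to T^*M$, $X\mapsto h(X,\cdot)$, with inverse $h^{-1}$; $(J^*\eta)(X)=\eta(JX)$; $J$ is $h$-symmetric if $h(JX,Y)=h(X,JY)$. $(\nabla_Xh)(Y)$ denotes the 1-form $Z\mapsto(\nabla_Xh)(Y,Z)=X(h(Y,Z))-h(\nabla_XY,Z)-h(Y,\nabla_XZ)$; $(\nabla_XJ^* )\beta:=\nabla_X(J^*\beta)-J^*(\nabla_X\beta)$; $T^\nabla(X,Y)=\nabla_XY-\nabla_YX-[X,Y]$. The $\nabla$-bracket: $[X+\eta,Y+\beta]_\nabla:=[X,Y]+\nabla_X\beta-\nabla_Y\eta$; $N^\nabla_{\hat J}(\sigma,\tau):=[\hat J\sigma,\hat J\tau]_\nabla-\hat J[\hat J\sigma,\tau]_\nabla-\hat J[\sigma,\hat J\tau]_\nabla+\hat J^2[\sigma,\tau]_\nabla$; $\nabla$-integrable means $N^\nabla_{\hat J}=0$. *)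

(* Smooth manifolds are not available, so the setting of the
   paper is rendered algebraically (Lie–Rinehart style):
     R  = the real numbers (realType),
     A  = the commutative R-algebra of smooth functions C^oo(M),
     V  = the A-module of vector fields,
     act X f = X(f)  (vector fields acting as derivations),
     br  = Lie bracket of vector fields,
     1-forms = A-linear maps V -> A (predicate is_form). *)
From HB Require Import structures.
From mathcomp Require Import all_boot all_order all_algebra.
From mathcomp Require Import reals.
Set Implicit Arguments. Unset Strict Implicit. Unset Printing Implicit Defensive.
Import Order.TTheory GRing.Theory Num.Theory.
Local Open Scope ring_scope.

Section Defs.
Variables (R : realType) (A : comAlgType R) (V : lmodType A).

Record lie_rinehart (act : V -> A -> A) (br : V -> V -> V) : Prop := {
  act_addl : forall X Y f, act (X + Y) f = act X f + act Y f;
  act_scalel : forall g X f, act (g *: X) f = g * act X f;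
  act_addr : forall X f g, act X (f + g) = act X f + act X g;
  act_scaleR : forall X (r : R) f, act X (r%:A * f) = r%:A * act X f;
  act_mul : forall X f g, act X (f * g) = act X f * g + f * act X g;
  br_addl : forall X Y Z, br (X + Y) Z = br X Z + br Y Z;
  br_anti : forall X Y, br X Y = - br Y X;
  br_leibniz : forall X Y f, br X (f *: Y) = f *: br X Y + act X f *: Y;
  br_jacobi : forall X Y Z,
      br X (br Y Z) + br Y (br Z X) + br Z (br X Y) = 0;
  act_br : forall X Y f, act (br X Y) f = act X (act Y f) - act Y (act X f)
}.

Record affine_connection (act : V -> A -> A) (nabla : V -> V -> V) : Prop := {
  conn_addl : forall X Y Z, nabla (X + Y) Z = nabla X Z + nabla Y Z;
  conn_scalel : forall f X Y, nabla (f *: X) Y = f *: nabla X Y;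
  conn_addr : forall X Y Z, nabla X (Y + Z) = nabla X Y + nabla X Z;
  conn_leibniz : forall X f Y, nabla X (f *: Y) = f *: nabla X Y + act X f *: Y
}.

Definition is_form (eta : V -> A) : Prop :=
  forall f X Y, eta (f *: X + Y) = f * eta X + eta Y.

Definition sym_tensor (h : V -> V -> A) : Prop :=
  (forall X Y, h X Y = h Y X) /\ (forall X, is_form (h X)).

Definition flat (h : V -> V -> A) (Y : V) : V -> A := fun Z => h Y Z.

Definition tensor11 (J : V -> V) : Prop :=
  forall f X Y, J (f *: X + Y) = f *: J X + J Y.

Definition h_symmetric (h : V -> V -> A) (J : V -> V) : Prop :=
  forall X Y, h (J X) Y = h X (J Y).

Definition covd (act : V -> A -> A) (nabla : V -> V -> V) (X : V) (eta : V -> A)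
  : V -> A := fun Z => act X (eta Z) - eta (nabla X Z).

Definition torsion (nabla : V -> V -> V) (br : V -> V -> V) (X Y : V) : V :=
  nabla X Y - nabla Y X - br X Y.

(* (\nabla_X h)(Y) as a 1-form *)
Definition covd_h (act : V -> A -> A) (nabla : V -> V -> V) (h : V -> V -> A)
  (X Y : V) : V -> A :=
  fun Z => act X (h Y Z) - h (nabla X Y) Z - h Y (nabla X Z).

Definition Jstar (J : V -> V) (eta : V -> A) : V -> A := fun X => eta (J X).

(* (\nabla_X J^* ) beta *)
Definition covd_Jstar (act : V -> A -> A) (nabla : V -> V -> V) (J : V -> V)
  (X : V) (beta : V -> A) : V -> A :=
  fun Z => covd act nabla X (Jstar J beta) Z - Jstar J (covd act nabla X beta) Z.

(* sections of TM (+) T^*M *)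
Definition sec := (V * (V -> A))%type.
Definition sadd (s t : sec) : sec := (s.1 + t.1, fun Z => s.2 Z + t.2 Z).
Definition sopp (s : sec) : sec := (- s.1, fun Z => - s.2 Z).
Definition szero : sec := (0, fun _ => 0).

Definition Jhat (J : V -> V) (hinv : (V -> A) -> V) (s : sec) : sec :=
  (- s.1 + (J (hinv s.2)) *+ 2, s.2).

Definition nbracket (act : V -> A -> A) (br : V -> V -> V) (nabla : V -> V -> V)
  (s t : sec) : sec :=
  (br s.1 t.1, fun Z => covd act nabla s.1 t.2 Z - covd act nabla t.1 s.2 Z).

Definition nijenhuis act br nabla J hinv (s t : sec) : sec :=
  let Jh := Jhat J hinv in
  let b := nbracket act br nabla in
  sadd (sadd (b (Jh s) (Jh t)) (sopp (Jh (b (Jh s) t))))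
       (sadd (sopp (Jh (b s (Jh t)))) (Jh (Jh (b s t)))).

Definition nabla_integrable act br nabla J hinv : Prop :=
  forall s t : sec, is_form s.2 -> is_form t.2 ->
    nijenhuis act br nabla J hinv s t = szero.

End Defs.

(* The structure Ĵ is an involution whose +1-eigenbundle is the graph
   L₊ = {J h⁻¹η + η} of J h⁻¹.  Expanding the Nijenhuis tensor with the
   additivity of the Lie bracket, of ∇ and of J h⁻¹ shows that its cotangent
   part vanishes identically and its tangent part on (X + η, Y + ξ) is
   4 (u₁ - J h⁻¹ u₂), where u is the ∇-bracket of the L₊-lifts of η and ξ:
   ∇-integrability says exactly that L₊ is closed under the ∇-bracket.
   For η = h(X), ξ = h(Y), pairing with h turns u ∈ L₊ into
   h([JX, JY], Z) = u₂(JZ) for all Z, and expanding ∇h, the torsion and ∇J*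
   with the h-symmetry of J, this is the stated identity. *)

From HB Require Import structures.
From mathcomp Require Import all_boot all_order all_algebra.
From mathcomp Require Import reals.
From mathcomp Require Import ring.
From Stdlib Require Import FunctionalExtensionality.
Import Order.TTheory GRing.Theory Num.Theory.
Set Implicit Arguments. Unset Strict Implicit. Unset Printing Implicit Defensive.
Local Open Scope ring_scope.

Lemma morphD_reflect {W1 W2 : zmodType} {f : W1 -> W2} :
  {morph f : x y / x + y} -> forall x u, f (- x + u *+ 2) + f x = f u *+ 2.
Proof. by move=> fD x u; rewrite -fD addrAC addNr add0r !mulr2n fD. Qed.

Lemma lmod_mulrn_eq0 {R : numFieldType} {A : lalgType R} {V : lmodType A}
    (v : V) n : (v *+ n.+1 == 0) = (v == 0).
Proof.
apply/eqP/eqP=> [vn0|->]; last by rewrite mul0rn.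
have nK : (n.+1%:R^-1 : R)%:A * n.+1%:R = 1 :> A.
  by rewrite mulr_algl -(scaler_nat n.+1 (1 : A)) scalerA mulVf ?pnatr_eq0 ?scale1r.
by rewrite -[v]scale1r -nK -scalerA scaler_nat vn0 scaler0.
Qed.

Section GeneralizedTangentBundle.
Variables (R : realType) (A : comAlgType R) (V : lmodType A).
Implicit Types (X Y Z : V) (f : A) (eta xi : V -> A) (J : V -> V)
  (hinv : (V -> A) -> V) (act : V -> A -> A) (br nabla : V -> V -> V).

Lemma form0 eta : is_form eta -> eta 0 = 0.
Proof.
move=> eta_form; have := eta_form 1 0 0.
by rewrite scaler0 addr0 mul1r -{1}[eta 0]addr0 => /addrI.
Qed.

Lemma formD eta X Y : is_form eta -> eta (X + Y) = eta X + eta Y.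
Proof. by move=> eta_form; rewrite -{1}[X]scale1r eta_form mul1r. Qed.

Lemma formZ eta f X : is_form eta -> eta (f *: X) = f * eta X.
Proof. by move=> eta_form; rewrite -[f *: X]addr0 eta_form form0 ?addr0. Qed.

Lemma form_sub eta xi : is_form eta -> is_form xi -> is_form (fun Z => eta Z - xi Z).
Proof. by move=> eta_form xi_form f X Y; rewrite eta_form xi_form; ring. Qed.

Lemma Jhat_involutive J hinv : involutive (Jhat J hinv).
Proof. by case=> X eta; rewrite /Jhat /= opprD opprK subrK. Qed.

Lemma nijenhuis_snd act br nabla J hinv s t :
  (nijenhuis act br nabla J hinv s t).2 = fun _ => 0.
Proof.
apply: functional_extensionality => Z.
by rewrite /nijenhuis /sadd /sopp /Jhat /nbracket /=; ring.
Qed.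

Section Connection.
Variables (act : V -> A -> A) (br nabla : V -> V -> V).
Hypotheses (LR : lie_rinehart act br) (conn : affine_connection act nabla).

Lemma br_addr X Y Z : br X (Y + Z) = br X Y + br X Z.
Proof. by rewrite (br_anti LR) (br_addl LR) opprD -!(br_anti LR). Qed.

Lemma covd_addl X Y eta Z : is_form eta ->
  covd act nabla (X + Y) eta Z = covd act nabla X eta Z + covd act nabla Y eta Z.
Proof. by move=> eta_form; rewrite /covd (act_addl LR) (conn_addl conn) formD //; ring. Qed.

Lemma covd_form X eta : is_form eta -> is_form (covd act nabla X eta).
Proof.
move=> eta_form f Y Z; rewrite /covd eta_form (act_addr LR) (act_mul LR).
by rewrite (conn_addr conn) (conn_leibniz conn) !formD // !formZ //; ring.
Qed.

Section Metric.
Variables (h : V -> V -> A) (hinv : (V -> A) -> V).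
Hypotheses (h_sym : sym_tensor h) (hinvK : forall Y, hinv (flat h Y) = Y)
  (flatK : forall eta, is_form eta -> flat h (hinv eta) = eta).

Lemma h_form X : is_form (h X).
Proof. exact: h_sym.2. Qed.

Lemma h_addl X Y Z : h (X + Y) Z = h X Z + h Y Z.
Proof. by rewrite !(h_sym.1 _ Z) (formD _ _ (h_form Z)). Qed.

Lemma h_oppl X Z : h (- X) Z = - h X Z.
Proof. by rewrite !(h_sym.1 _ Z) -scaleN1r (formZ _ _ (h_form Z)) mulN1r. Qed.

Lemma flat_inj X Y : (forall Z, h X Z = h Y Z) -> X = Y.
Proof.
by move=> hXY; rewrite -(hinvK X) -(hinvK Y); congr hinv; apply: functional_extensionality.
Qed.

Lemma hinvD eta xi : is_form eta -> is_form xi ->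
  hinv (fun Z => eta Z + xi Z) = hinv eta + hinv xi.
Proof.
move=> eta_form xi_form.
rewrite -{1}(flatK eta_form) -{1}(flatK xi_form) -[hinv eta + _]hinvK.
by congr hinv; apply: functional_extensionality => Z; rewrite /flat h_addl.
Qed.

Section ProductStructure.
Variable J : V -> V.
Hypotheses (J_tensor : tensor11 J) (J_sym : h_symmetric h J).

Lemma J_hinvD eta xi : is_form eta -> is_form xi ->
  J (hinv (fun Z => eta Z + xi Z)) = J (hinv eta) + J (hinv xi).
Proof.
by move=> eta_form xi_form; rewrite hinvD // -{1}[hinv eta]scale1r J_tensor scale1r.
Qed.

Lemma h_J_hinv eta Z : is_form eta -> h (J (hinv eta)) Z = eta (J Z).
Proof. by move=> eta_form; rewrite J_sym -[eta in RHS](flatK eta_form). Qed.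

Lemma nijenhuis_fst X Y eta xi : is_form eta -> is_form xi ->
  let u := nbracket act br nabla (J (hinv eta), eta) (J (hinv xi), xi) in
  (nijenhuis act br nabla J hinv (X, eta) (Y, xi)).1 = (u.1 - J (hinv u.2)) *+ 4.
Proof.
move=> eta_form xi_form u.
rewrite /nijenhuis; cbv zeta; rewrite Jhat_involutive /sadd /sopp /=.
set X' := - X + _ *+ 2; set Y' := - Y + _ *+ 2.
have bracket_sum : br X' Y' + br X' Y + (br X Y' + br X Y) = u.1 *+ 4.
  rewrite !(morphD_reflect (br_addr _)) -mulrnDl.
  by rewrite (morphD_reflect (fun U W => br_addl LR U W _)) -mulrnA.
have cotangent_form U W : is_form (fun Z => covd act nabla U xi Z - covd act nabla W eta Z).
  by apply: form_sub; apply: covd_form.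
have covd_sum : J (hinv (fun Z => covd act nabla X' xi Z - covd act nabla Y eta Z))
    + J (hinv (fun Z => covd act nabla X xi Z - covd act nabla Y' eta Z))
    = J (hinv u.2) *+ 2.
  have u2_form : is_form u.2 by exact: cotangent_form.
  rewrite -(J_hinvD (cotangent_form _ _) (cotangent_form _ _)) mulr2n -(J_hinvD u2_form u2_form).
  congr (J (hinv _)).
  apply: functional_extensionality => Z.
  have eta_part : covd act nabla X' xi Z + covd act nabla X xi Z
      = covd act nabla (J (hinv eta)) xi Z *+ 2.
    exact: (morphD_reflect (fun U W => covd_addl U W Z xi_form)).
  have xi_part : covd act nabla Y' eta Z + covd act nabla Y eta Z
      = covd act nabla (J (hinv xi)) eta Z *+ 2.
    exact: (morphD_reflect (fun U W => covd_addl U W Z eta_form)).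
  rewrite -mulr2n mulrnBl /= -eta_part -xi_part; ring.
have regroup (a b c d p q : V) :
    a - (- b + p) + (- (- c + q) + d) = a + b + (c + d) - (p + q).
  by rewrite !opprD !opprK [a + _]addrA [c - q + d]addrAC addrACA.
by rewrite regroup -mulrnDl bracket_sum covd_sum -mulrnA -mulrnBl.
Qed.

Lemma nabla_integrableP : nabla_integrable act br nabla J hinv <->
  forall eta xi, is_form eta -> is_form xi ->
  let u := nbracket act br nabla (J (hinv eta), eta) (J (hinv xi), xi) in
  u.1 = J (hinv u.2).
Proof.
split=> [integrable eta xi eta_form xi_form u | closed [X eta] [Y xi] /= eta_form xi_form].
  apply/eqP; rewrite -subr_eq0 -(lmod_mulrn_eq0 _ 3).
  by rewrite -(nijenhuis_fst 0 0 eta_form xi_form) integrable.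
by rewrite [LHS]surjective_pairing nijenhuis_snd nijenhuis_fst // closed // subrr mul0rn.
Qed.

Lemma integrability_tensorE X Y Z :
  covd_h act nabla h (J X) (J Y) Z - covd_h act nabla h (J Y) (J X) Z
    + h (torsion nabla br (J X) (J Y)) Z
  - (covd_Jstar act nabla J (J X) (flat h Y) Z - covd_Jstar act nabla J (J Y) (flat h X) Z)
  = (nbracket act br nabla (J X, flat h X) (J Y, flat h Y)).2 (J Z) - h (br (J X) (J Y)) Z.
Proof.
rewrite /= /covd_h /torsion /covd_Jstar /covd /Jstar /flat.
by rewrite !h_addl !h_oppl -!J_sym; ring.
Qed.

Lemma integrability_tensorP X Y :
  (fun Z => covd_h act nabla h (J X) (J Y) Z - covd_h act nabla h (J Y) (J X) Z
            + h (torsion nabla br (J X) (J Y)) Z)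
  = (fun Z => covd_Jstar act nabla J (J X) (flat h Y) Z
              - covd_Jstar act nabla J (J Y) (flat h X) Z)
  <-> let u := nbracket act br nabla (J X, flat h X) (J Y, flat h Y) in
      u.1 = J (hinv u.2).
Proof.
have u2_form : is_form (nbracket act br nabla (J X, flat h X) (J Y, flat h Y)).2.
  by apply: form_sub; apply: covd_form; apply: h_form.
split=> [tensor_eq | closed].
  apply: flat_inj => Z; rewrite h_J_hinv //; apply/eqP.
  by rewrite eq_sym -subr_eq0 -integrability_tensorE (congr1 (@^~ Z) tensor_eq) subrr.
apply: functional_extensionality => Z; apply/eqP.
by rewrite -subr_eq0 integrability_tensorE [br _ _]closed h_J_hinv // subrr.
Qed.

End ProductStructure.
End Metric.
End Connection.
End GeneralizedTangentBundle.

Theorem proposition3p6 (R : realType) (A : comAlgType R) (V : lmodType A)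
  (act : V -> A -> A) (br : V -> V -> V) (nabla : V -> V -> V)
  (h : V -> V -> A) (hinv : (V -> A) -> V) (J : V -> V) :
  lie_rinehart act br ->
  affine_connection act nabla ->
  sym_tensor h ->
  (* non-degeneracy of h: flat h : V -> {1-forms} is bijective with inverse hinv *)
  (forall Y, hinv (flat h Y) = Y) ->
  (forall eta, is_form eta -> flat h (hinv eta) = eta) ->
  tensor11 J ->
  h_symmetric h J ->
  nabla_integrable act br nabla J hinv <->
  (forall X Y : V,
     (fun Z => covd_h act nabla h (J X) (J Y) Z - covd_h act nabla h (J Y) (J X) Z
               + h (torsion nabla br (J X) (J Y)) Z)
     = (fun Z => covd_Jstar act nabla J (J X) (flat h Y) Z
                 - covd_Jstar act nabla J (J Y) (flat h X) Z)).
Proof.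
move=> LR conn h_sym hinvK flatK J_tensor J_sym.
apply: iff_trans (nabla_integrableP LR conn h_sym hinvK flatK J_tensor) _.
split=> [closed X Y | tensor_eq eta xi eta_form xi_form].
  apply/(integrability_tensorP LR conn h_sym hinvK flatK J_sym).
  by have := closed _ _ (h_form h_sym X) (h_form h_sym Y); rewrite !hinvK.
have := tensor_eq (hinv eta) (hinv xi).
by move/(integrability_tensorP LR conn h_sym hinvK flatK J_sym); rewrite !flatK.
Qed.
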